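(* Let $L$ be a finite-dimensional Lie algebra over a field $F$ and let $0\ne u\in L$ be such that $Fu$ is semi-modular in $L$ but not an ideal of $L$. Then one of the following holds: (i) $L$ is almost abelian; (ii) $\langle u,x\rangle$ is a $\mu$-algebra for every $x\in L\setminus Fu$; (iii) $F$ has characteristic two and there is an isomorphism $L\cong K$ carrying $Fu$ onto $Fc$.
   Context: $K$ denotes the three-dimensional Lie algebra with basis $a,b,c$ and products $[a,b]=c$, $[b,c]=b$, $[a,c]=a$. $\langle U,B\rangle$ denotes the generated subalgebra. A subalgebra $B$ covers a subalgebra $A$ if $A$ is a maximal subalgebra of $B$. $U$ is upper modular (um) in $L$ if whenever $B$ is a subalgebra of $L$ which covers $U\cap B$, then $\langle U,B\rangle$ covers $U$; $U$ is lower modular (lm) in $L$ if whenever $B$ is a subalgebra of $L$ such that $\langle U,B\rangle$ covers $U$, then $B$ covers $U\cap B$; $U$ is semi-modular (sm) in $L$ if it is both um and lm. A $\mu$-algebra is a non-solvable Lie algebra in which every proper subalgebra is one-dimensional. $L$ is almost abelian if $L=L^2\oplus Fx$ for some $x$, where $L^2=[L,L]$ is abelian and $\mathrm{ad}\,x$ acts as the identity map on $L^2$. *)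

From HB Require Import structures.
From mathcomp Require Import all_boot all_order all_algebra.
Set Implicit Arguments. Unset Strict Implicit. Unset Printing Implicit Defensive.
Import GRing.Theory.
Local Open Scope ring_scope.


Section Lie.
Variables (F : fieldType) (vT : vectType F) (br : vT -> vT -> vT).

Definition lie_bracket : Prop :=
  [/\ (forall (a : F) (x y z : vT), br (a *: x + y) z = a *: br x z + br y z),
      (forall (a : F) (x y z : vT), br x (a *: y + z) = a *: br x y + br x z),
      (forall x : vT, br x x = 0) &
      (forall x y z : vT, br x (br y z) + br y (br z x) + br z (br x y) = 0)].

Definition subalg (U : {vspace vT}) : Prop :=
  forall x y, x \in U -> y \in U -> br x y \in U.

Definition ideal (U : {vspace vT}) : Prop :=
  forall x y, y \in U -> br x y \in U.

(* [U,V]: the span of all brackets [x,y], x in U, y in V (by bilinearity it is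
   spanned by the brackets of basis vectors) *)
Definition brv (U V : {vspace vT}) : {vspace vT} :=
  <<[seq br x y | x <- vbasis U, y <- vbasis V]>>%VS.

Definition is_gen (W U B : {vspace vT}) : Prop :=
  [/\ subalg W, (U + B <= W)%VS &
      forall S, subalg S -> (U + B <= S)%VS -> (W <= S)%VS].

Definition covers (B A : {vspace vT}) : Prop :=
  [/\ subalg A, subalg B, (A <= B)%VS, A != B &
      forall C, subalg C -> (A <= C)%VS -> (C <= B)%VS -> C = A \/ C = B].

Definition upper_modular (U : {vspace vT}) : Prop :=
  forall B, subalg B -> covers B (U :&: B)%VS ->
  forall W, is_gen W U B -> covers W U.

Definition lower_modular (U : {vspace vT}) : Prop :=
  forall B, subalg B ->
  forall W, is_gen W U B -> covers W U -> covers B (U :&: B)%VS.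

Definition semi_modular (U : {vspace vT}) : Prop :=
  upper_modular U /\ lower_modular U.

Definition derived (S : {vspace vT}) (n : nat) : {vspace vT} :=
  iter n (fun D => brv D D) S.

Definition solvable_sub (S : {vspace vT}) : Prop :=
  exists n, derived S n = 0%VS.

Definition mu_algebra (S : {vspace vT}) : Prop :=
  ~ solvable_sub S /\
  forall C, subalg C -> (C <= S)%VS -> C != S -> C != 0%VS -> \dim C = 1%N.

Definition almost_abelian : Prop :=
  let L2 := brv fullv fullv in
  exists x : vT,
    [/\ (L2 + <[x]> = fullv)%VS, (L2 :&: <[x]> = 0)%VS,
        (forall y z, y \in L2 -> z \in L2 -> br y z = 0) &
        (forall y, y \in L2 -> br x y = y)].

End Lie.

(* The algebra K on F^3 with basis a = e0, b = e1, c = e2 and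
   [a,b] = c, [b,c] = b, [a,c] = a. *)
Definition Kbr (F : fieldType) (v w : 'rV[F]_3) : 'rV[F]_3 :=
  \row_(i < 3)
    (if val i == 0%N then v 0 0 * w 0 2 - v 0 2 * w 0 0
     else if val i == 1%N then v 0 1 * w 0 2 - v 0 2 * w 0 1
     else v 0 0 * w 0 1 - v 0 1 * w 0 0).

Definition Ka (F : fieldType) : 'rV[F]_3 := \row_(i < 3) (if val i == 0%N then 1 else 0).
Definition Kb (F : fieldType) : 'rV[F]_3 := \row_(i < 3) (if val i == 1%N then 1 else 0).
Definition Kc (F : fieldType) : 'rV[F]_3 := \row_(i < 3) (if val i == 2%N then 1 else 0).

(* Call the plane Fu + Fz closed when [u,z] lies in it, i.e.
   when it is a subalgebra.  The proof splits on whether all planes through u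
   are closed.

   - Upper modularity makes each subalgebra <u,x> with x outside Fu cover Fu.
     Comparing two such covers shows that as soon as one plane through u is
     not closed, none is (closed_plane_propagates).  Then lower modularity
     forces every proper nonzero subalgebra of <u,x> to be a line, and a Lie
     algebra of dimension at least 3 with this property is not solvable
     (lines_only_not_solvable): each <u,x> is a mu-algebra.
   - If all planes through u are closed, ad u acts on L/Fu as a scalar
     (common_eigenvalue), nonzero as Fu is not an ideal.  After rescaling,
     ad v is the identity modulo Fv = Fu, and L = E + Fv with E = [v,L] the
     fixed space of ad v.  If E is abelian, L is almost abelian; otherwise
     Jacobi forces characteristic 2 and dim E = 2, and a suitable basis of E
     together with v is a frame identifying L with K and Fu with Fc. *)

From HB Require Import structures.
From mathcomp Require Import all_boot all_order all_algebra.
From Stdlib Require Import Classical.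
Set Implicit Arguments. Unset Strict Implicit. Unset Printing Implicit Defensive.
Import GRing.Theory.
Local Open Scope ring_scope.

Section LieAlgebra.
Variables (F : fieldType) (vT : vectType F) (br : vT -> vT -> vT).
Hypothesis Hlie : lie_bracket br.

Lemma brL a x y z : br (a *: x + y) z = a *: br x z + br y z.
Proof. by case: Hlie. Qed.
Lemma brR a x y z : br x (a *: y + z) = a *: br x y + br x z.
Proof. by case: Hlie. Qed.
Lemma brxx x : br x x = 0.
Proof. by case: Hlie. Qed.
Lemma jacobi x y z : br x (br y z) + br y (br z x) + br z (br x y) = 0.
Proof. by case: Hlie. Qed.

Lemma br0l z : br 0 z = 0.
Proof. by have := brL (-1) z z z; rewrite !scaleN1r !addNr. Qed.
Lemma br0r z : br z 0 = 0.
Proof. by have := brR (-1) z z z; rewrite !scaleN1r !addNr. Qed.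
Lemma brDl x y z : br (x + y) z = br x z + br y z.
Proof. by have := brL 1 x y z; rewrite !scale1r. Qed.
Lemma brDr x y z : br z (x + y) = br z x + br z y.
Proof. by have := brR 1 z x y; rewrite !scale1r. Qed.
Lemma brZl a x z : br (a *: x) z = a *: br x z.
Proof. by have := brL a x 0 z; rewrite !addr0 br0l addr0. Qed.
Lemma brZr a x z : br z (a *: x) = a *: br z x.
Proof. by have := brR a z x 0; rewrite !addr0 br0r addr0. Qed.
Lemma brNl x z : br (- x) z = - br x z.
Proof. by rewrite -scaleN1r brZl scaleN1r. Qed.
Lemma brNr x z : br z (- x) = - br z x.
Proof. by rewrite -scaleN1r brZr scaleN1r. Qed.
Lemma brBl x y z : br (x - y) z = br x z - br y z.
Proof. by rewrite brDl brNl. Qed.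
Lemma brBr x y z : br z (x - y) = br z x - br z y.
Proof. by rewrite brDr brNr. Qed.
Lemma brC x y : br x y = - br y x.
Proof.
apply/eqP; rewrite -addr_eq0.
by have := brxx (x + y); rewrite brDl !brDr !brxx add0r addr0 => ->.
Qed.

Lemma oppv_pchar2 (w : vT) : 2%N \in [pchar F] -> - w = w.
Proof. by move=> p2; rewrite -scaleN1r (oppr_pchar2 p2) scale1r. Qed.

Lemma span_ind (Q : vT -> Prop) (X : seq vT) :
  Q 0 -> (forall a x y, Q x -> Q y -> Q (a *: x + y)) ->
  (forall x, x \in X -> Q x) -> forall v, v \in <<X>>%VS -> Q v.
Proof.
move=> Q0 QL QX v; rewrite -[X]/(tval (in_tuple X)) => /coord_span ->.
elim/big_rec: _ => // i w _ Qw; apply: QL => //; exact/QX/mem_nth.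
Qed.

Lemma mem_brv (A B : {vspace vT}) x y :
  x \in A -> y \in B -> br x y \in brv br A B.
Proof.
move=> xA yB.
have Hx : forall y', y' \in vbasis B -> br x y' \in brv br A B.
  move: x xA; rewrite -{1}(span_basis (vbasisP A)); apply: span_ind.
  - by move=> y' _; rewrite br0l mem0v.
  - by move=> a x1 x2 H1 H2 y' Hy; rewrite brL memvD ?memvZ ?H1 ?H2.
  - by move=> x' Hx' y' Hy'; apply/memv_span/allpairs_f.
move: y yB; rewrite -{1}(span_basis (vbasisP B)); apply: span_ind.
- by rewrite br0r mem0v.
- by move=> a y1 y2 H1 H2; rewrite brR memvD ?memvZ.
- exact: Hx.
Qed.

Lemma brv_min (A B S : {vspace vT}) :
  (forall x y, x \in A -> y \in B -> br x y \in S) -> (brv br A B <= S)%VS.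
Proof.
move=> H; apply/span_subvP => w /allpairsP [[x y] [/= Hx Hy ->]].
by apply: H; apply: vbasis_mem.
Qed.

Lemma subalg0 : subalg br 0%VS.
Proof. by move=> x y; rewrite memv0 => /eqP -> _; rewrite br0l mem0v. Qed.

Lemma subalg_line x : subalg br <[x]>%VS.
Proof.
move=> y z /vlineP [k ->] /vlineP [m ->].
by rewrite brZl brZr brxx !scaler0 mem0v.
Qed.

Lemma subalgf : subalg br fullv.
Proof. by move=> x y _ _; rewrite memvf. Qed.

Lemma subalg_cap S T : subalg br S -> subalg br T -> subalg br (S :&: T)%VS.
Proof.
move=> HS HT x y /memv_capP [xS xT] /memv_capP [yS yT].
by apply/memv_capP; split; [apply: HS | apply: HT].
Qed.

(* The subalgebra generated by two subspaces exists: descend along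
   subalgebras containing U + B until no further one can be cut out. *)
Lemma exists_gen U B : exists W, is_gen br W U B.
Proof.
suff H n S : subalg br S -> (U + B <= S)%VS -> (\dim S <= n)%N ->
    exists W, is_gen br W U B.
  exact: (H _ fullv subalgf (subvf _) (leqnn _)).
elim: n S => [|n IH] S HS HUB Hd.
  exists S; split=> // T _ _.
  by move: Hd; rewrite leqn0 dimv_eq0 => /eqP ->; rewrite sub0v.
have [[T [HT HUBT HST]] | Hmin] :=
  classic (exists T, [/\ subalg br T, (U + B <= T)%VS & ~~ (S <= T)%VS]).
  apply: (IH (S :&: T)%VS); [exact: subalg_cap | by rewrite subv_cap HUB |].
  rewrite -ltnS (leq_trans _ Hd) // (ltn_leqif (dimv_leqif_eq (capvSl _ _))).
  by apply: contra HST => /eqP <-; rewrite capvSr.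
exists S; split=> // T HT HUBT; apply/negPn/negP => HST.
by apply: Hmin; exists T.
Qed.

Lemma gen_min W U B S : is_gen br W U B -> subalg br S ->
  (U <= S)%VS -> (B <= S)%VS -> (W <= S)%VS.
Proof. by case=> _ _ H HS HU HB; apply: H => //; rewrite subv_add HU HB. Qed.

Lemma gen_subvl W U B : is_gen br W U B -> (U <= W)%VS.
Proof. by case=> _ H _; apply: subv_trans H; apply: addvSl. Qed.

Lemma gen_subvr W U B : is_gen br W U B -> (B <= W)%VS.
Proof. by case=> _ H _; apply: subv_trans H; apply: addvSr. Qed.

Lemma gen_mem_l W (u : vT) B : is_gen br W <[u]>%VS B -> u \in W.
Proof. by move/gen_subvl/subvP; apply; rewrite memv_line. Qed.

Lemma gen_mem_r W U (x : vT) : is_gen br W U <[x]>%VS -> x \in W.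
Proof. by move/gen_subvr/subvP; apply; rewrite memv_line. Qed.

Lemma line_cap_eq0 (x : vT) (B : {vspace vT}) : x \notin B -> (<[x]> :&: B = 0)%VS.
Proof.
move=> xB; apply/eqP; rewrite -subv0; apply/subvP => w /memv_capP [/vlineP [k ->] Hw].
rewrite memv0 scaler_eq0; apply/orP; left; apply/eqP.
by apply: contraNeq xB => Hk; rewrite -(scalerK Hk x) memvZ.
Qed.

Lemma scale_notin_eq0 (U : {vspace vT}) k z : k *: z \in U -> z \notin U -> k = 0.
Proof.
move=> kzU zU; apply/eqP; apply: contraNT zU => Hk.
by rewrite -(scalerK Hk z) memvZ.
Qed.

Lemma covers0_dim1 C : covers br C 0%VS -> \dim C = 1%N.
Proof.
case=> _ HC _ Hne Hmax.
have Hc : vpick C != 0 by rewrite vpick0 eq_sym.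
have Hs : (<[vpick C]> <= C)%VS by rewrite -memvE memv_pick.
have [E|E] := Hmax <[vpick C]>%VS (@subalg_line (vpick C)) (sub0v _) Hs.
- by move: (congr1 (@dimv _ _) E); rewrite dim_vline Hc dimv0.
- by rewrite -E dim_vline Hc.
Qed.

Lemma line_covers0 (x : vT) : x != 0 -> covers br <[x]>%VS 0%VS.
Proof.
move=> Hx; split; [exact: subalg0 | exact: subalg_line | exact: sub0v | |].
  by rewrite eq_sym -dimv_eq0 dim_vline Hx.
move=> C _ _ HC.
have := dimvS HC; rewrite dim_vline Hx leq_eqVlt ltnS leqn0 dimv_eq0.
case/orP=> [/eqP Hd|/eqP ->]; last by left.
by right; apply/eqP; rewrite eqEdim HC dim_vline Hx Hd.
Qed.

Lemma covers_fill W U S : covers br W U -> subalg br S ->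
  (U <= S)%VS -> (S <= W)%VS -> ~~ (S <= U)%VS -> S = W.
Proof.
case=> _ _ _ _ Hmax HS US SW SU.
by have [E|//] := Hmax S HS US SW; rewrite E subvv in SU.
Qed.

(* Upper modularity: <u,x> covers Fu whenever x is not in Fu, since Fx covers
   its trivial intersection with Fu. *)
Lemma gen_covers_line (u x : vT) W : upper_modular br <[u]>%VS -> x \notin <[u]>%VS ->
  is_gen br W <[u]>%VS <[x]>%VS -> covers br W <[u]>%VS.
Proof.
move=> Hum xU; apply: Hum; first exact: subalg_line.
rewrite capvC line_cap_eq0 //; apply: line_covers0.
by apply: contraNneq xU => ->; rewrite mem0v.
Qed.

(* Lower modularity: a subalgebra B of dimension at least 2 avoiding u
   generates with u a subalgebra that does not cover Fu, since otherwise B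
   would cover B :&: Fu = 0 and be a line. *)
Lemma gen_not_covers (u : vT) B W : lower_modular br <[u]>%VS -> subalg br B ->
  u \notin B -> (2 <= \dim B)%N -> is_gen br W <[u]>%VS B -> ~ covers br W <[u]>%VS.
Proof.
move=> Hlm HB uB Hd HW /(Hlm B HB W HW).
by rewrite line_cap_eq0 // => /covers0_dim1 E; rewrite E in Hd.
Qed.

Definition closed_plane (u z : vT) := br u z \in (<[u]> + <[z]>)%VS.

Lemma span2P (u z w : vT) :
  reflect (exists a b, w = a *: u + b *: z) (w \in (<[u]> + <[z]>)%VS).
Proof.
apply: (iffP memv_addP) => [[p /vlineP [a ->] [q /vlineP [b ->] ->]]|[a [b ->]]].
  by exists a, b.
exists (a *: u); first by rewrite memvZ ?memv_line.
by exists (b *: z); first by rewrite memvZ ?memv_line.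
Qed.

Lemma plane_l (u z : vT) : u \in (<[u]> + <[z]>)%VS.
Proof. by rewrite (subvP (addvSl _ _)) ?memv_line. Qed.

Lemma plane_r (u z : vT) : z \in (<[u]> + <[z]>)%VS.
Proof. by rewrite (subvP (addvSr _ _)) ?memv_line. Qed.

Lemma dim_span2 (u y : vT) : u != 0 -> y \notin <[u]>%VS -> \dim (<[u]> + <[y]>)%VS = 2%N.
Proof.
move=> Hu yU; rewrite dimv_disjoint_sum; last by rewrite capvC line_cap_eq0.
by rewrite !dim_vline Hu; case: eqP yU => // ->; rewrite mem0v.
Qed.

Lemma subalg_plane (u y : vT) : closed_plane u y -> subalg br (<[u]> + <[y]>)%VS.
Proof.
move=> Huy x x' /span2P [a [b ->]] /span2P [c [d ->]].
have Hyu : br y u \in (<[u]> + <[y]>)%VS by rewrite brC memvN.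
rewrite !brDl !brZl !brDr !brZr !brxx !scaler0 add0r addr0.
by rewrite memvD ?memvZ.
Qed.

Lemma closed_plane_line (u x : vT) : x \in <[u]>%VS -> closed_plane u x.
Proof. by move=> /vlineP [k ->]; rewrite /closed_plane brZr brxx scaler0 mem0v. Qed.

Lemma plane_eq (u x y : vT) : u != 0 -> x \notin <[u]>%VS ->
  x \in (<[u]> + <[y]>)%VS -> (<[u]> + <[x]>)%VS = (<[u]> + <[y]>)%VS.
Proof.
move=> Hu xU xP; have yU : y \notin <[u]>%VS.
  apply: contra xU => yU; apply: subvP xP.
  by rewrite subv_add subvv -memvE.
apply/eqP; rewrite eqEdim subv_add addvSl -memvE xP.
by rewrite !dim_span2.
Qed.

(* For Fu + Fx not closed and Fu + Fy closed with [u,y] = a u + b y, the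
   covers <u,x> and <u,x+y> of Fu share [u,x] - b x, which lies outside Fu;
   hence <u,x> lies in <u,x+y>, which the closed plane Fu + Fy then fills.
   So x lies in Fu + Fy = Fu + Fx, and that plane would be closed. *)
Lemma closed_plane_propagates (u x y : vT) : u != 0 -> upper_modular br <[u]>%VS ->
  ~ closed_plane u x -> y \notin <[u]>%VS -> ~ closed_plane u y.
Proof.
move=> Hu Hum Hx yU Hy.
have xU : x \notin <[u]>%VS by apply/negP => /closed_plane_line.
have zU : x + y \notin <[u]>%VS.
  apply/negP => /vlineP [k Ek]; apply: Hx.
  have Ex : x = k *: u - y by rewrite -Ek addrK.
  have xP : x \in (<[u]> + <[y]>)%VS by rewrite Ex memvB ?memvZ ?plane_l ?plane_r.
  by rewrite /closed_plane (plane_eq Hu xU xP) Ex brBr brZr brxx scaler0 sub0r memvN.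
have [Wz HWz] := exists_gen <[u]>%VS <[x + y]>%VS.
have [Wx HWx] := exists_gen <[u]>%VS <[x]>%VS.
have cWz := gen_covers_line Hum zU HWz; have cWx := gen_covers_line Hum xU HWx.
have [[Wzs _ _] [Wxs _ _]] := (HWz, HWx).
have [uWz uWx] := (gen_mem_l HWz, gen_mem_l HWx).
have [zWz xWx] := (gen_mem_r HWz, gen_mem_r HWx).
have /span2P [a [b Euy]] := Hy.
pose x1 := br u x - b *: x.
have x1Wz : x1 \in Wz.
  have -> : x1 = br u (x + y) - b *: (x + y) - a *: u.
    rewrite brDr Euy scalerDr opprD !addrA (addrAC _ (b *: y)) addrK.
    by rewrite (addrAC _ (- (b *: x))) addrK.
  by rewrite !memvB ?memvZ ?Wzs.
have x1U : x1 \notin <[u]>%VS.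
  apply/negP => x1U; apply: Hx; rewrite /closed_plane -(subrK (b *: x) (br u x)).
  by rewrite memv_add ?memvZ ?memv_line.
have capW : (Wz :&: Wx)%VS = Wx.
  apply: covers_fill cWx (subalg_cap Wzs Wxs) _ (capvSr _ _) _.
    by rewrite subv_cap -!memvE uWz uWx.
  by apply/subvPn; exists x1; rewrite // memv_cap x1Wz memvB ?memvZ ?Wxs.
have xWz : x \in Wz by move: xWx; rewrite -capW => /memv_capP [].
have planeW : (<[u]> + <[y]>)%VS = Wz.
  apply: covers_fill cWz (subalg_plane Hy) (addvSl _ _) _ _.
    by rewrite subv_add -!memvE uWz -(addKr x y) memvD ?memvN.
  by apply/subvPn; exists y; rewrite ?plane_r.
have xP : x \in (<[u]> + <[y]>)%VS by rewrite planeW.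
by apply: Hx; rewrite /closed_plane (plane_eq Hu xU xP) planeW Wzs.
Qed.

Lemma subspace_between (M W : {vspace vT}) k : (M <= W)%VS ->
  (\dim M <= k <= \dim W)%N -> exists2 V : {vspace vT}, (M <= V <= W)%VS & \dim V = k.
Proof.
move=> MW; elim: k => [|k IH].
  rewrite leqn0 dimv_eq0 => /andP [/eqP -> _].
  by exists 0%VS; rewrite ?sub0v ?dimv0.
case/andP; rewrite leq_eqVlt => /orP [/eqP <- _|lt_Mk lt_kW].
  by exists M; rewrite ?subvv.
have [|V /andP [MV VW] dV] := IH; first by rewrite -ltnS lt_Mk ltnW.
have /subvPn [w wW wV] : ~~ (W <= V)%VS.
  by apply: contraTN lt_kW => /dimvS; rewrite dV -leqNgt.
exists (V + <[w]>)%VS; first by rewrite (subv_trans MV (addvSl _ _)) subv_add VW -memvE.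
rewrite dimv_disjoint_sum ?dV ?dim_vline; last by rewrite capvC line_cap_eq0.
have -> : w != 0 by apply: contraNneq wV => ->; rewrite mem0v.
by rewrite addn1.
Qed.

(* A subalgebra W of dimension at least 3 whose proper nonzero subalgebras
   are all lines is not solvable: its derived algebra M is proper (so has
   dimension at most 1), every subspace between M and W is a subalgebra, and
   a plane between them would be a proper subalgebra that is not a line. *)
Lemma lines_only_not_solvable W : subalg br W -> (3 <= \dim W)%N ->
  (forall C, subalg br C -> (C <= W)%VS -> C != W -> C != 0%VS -> \dim C = 1%N) ->
  ~ solvable_sub br W.
Proof.
move=> HW dW Hlines [n Hn].
pose M := brv br W W.
have MW : (M <= W)%VS by apply: brv_min => x z xW zW; apply: HW.
have between V : (M <= V)%VS -> (V <= W)%VS -> subalg br V.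
  by move=> MV VW x z xV zV; apply/(subvP MV)/mem_brv; apply: (subvP VW).
have W0 : W != 0%VS by rewrite -dimv_eq0; case: (\dim W) dW.
have MneW : M != W.
  apply: contra_neq W0 => EM.
  have fixW m : derived br W m = W by elim: m => //= m ->.
  by rewrite -Hn fixW.
have dM : (\dim M <= 2)%N.
  have [->|M0] := eqVneq M 0%VS; first by rewrite dimv0.
  by rewrite (Hlines M (between M (subvv M) MW) MW MneW M0).
have [|V /andP [MV VW] dV] := @subspace_between M W 2 MW; first by rewrite dM ltnW.
have VneW : V != W by apply: contraTneq dW => <-; rewrite dV.
have V0 : V != 0%VS by rewrite -dimv_eq0 dV.
by have := Hlines V (between V MV VW) VW VneW V0; rewrite dV.
Qed.

(* Semi-modularity: for x outside Fu, every proper nonzero subalgebra C of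
   W = <u,x> is a line.  Otherwise C, having dimension at least 2, is not in
   Fu.  If u is in C, then C lies between Fu and its cover W, so C = W.
   If not, <u,C> lies between Fu and W and is not Fu, so it is W; but then
   it covers Fu, which lower modularity forbids. *)
Lemma gen_proper_subalg_line (u x : vT) W : u != 0 -> semi_modular br <[u]>%VS ->
  x \notin <[u]>%VS -> is_gen br W <[u]>%VS <[x]>%VS ->
  forall C, subalg br C -> (C <= W)%VS -> C != W -> C != 0%VS -> \dim C = 1%N.
Proof.
move=> Hu [Hum Hlm] xU HW C HC CW CneW C0.
have cW := gen_covers_line Hum xU HW.
have [// | dC] := eqVneq (\dim C) 1%N.
have dC2 : (2 <= \dim C)%N by move: dC C0; rewrite -dimv_eq0; case: (\dim C) => [|[|]].
have CU : ~~ (C <= <[u]>)%VS.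
  by apply: contraTN dC2 => /dimvS; rewrite dim_vline Hu -leqNgt.
have [uC | uC] := boolP (u \in C).
  have uCs : (<[u]> <= C)%VS by rewrite -memvE.
  by rewrite (covers_fill cW HC uCs CW CU) eqxx in CneW.
have [W' HW'] := exists_gen <[u]>%VS C.
have [HW's _ _] := HW'; have [HWs _ _] := HW.
have W'W : (W' <= W)%VS by apply: gen_min HW' HWs (gen_subvl HW) CW.
have W'U : ~~ (W' <= <[u]>)%VS.
  by apply: contra CU => W'U; apply: subv_trans (gen_subvr HW') W'U.
have E := covers_fill cW HW's (gen_subvl HW') W'W W'U.
by case: (gen_not_covers Hlm HC uC dC2 HW'); rewrite E.
Qed.

Lemma gen_mu_algebra (u x : vT) W : u != 0 -> semi_modular br <[u]>%VS ->
  x \notin <[u]>%VS -> ~ closed_plane u x -> is_gen br W <[u]>%VS <[x]>%VS ->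
  mu_algebra br W.
Proof.
move=> Hu Hsm xU Hx HW; have Hlines := gen_proper_subalg_line Hu Hsm xU HW.
split=> //; have [HWs _ _] := HW.
apply: (lines_only_not_solvable HWs) Hlines.
rewrite ltnNge; apply/negP => dW; apply: Hx.
have PW : (<[u]> + <[x]> <= W)%VS by rewrite subv_add -!memvE (gen_mem_l HW) (gen_mem_r HW).
have E : (<[u]> + <[x]>)%VS = W by apply/eqP; rewrite eqEdim PW dim_span2.
by rewrite /closed_plane E HWs ?(gen_mem_l HW) ?(gen_mem_r HW).
Qed.

Lemma br_line_eq0 (u z : vT) : z \in <[u]>%VS -> br u z = 0.
Proof. by move=> /vlineP [m ->]; rewrite brZr brxx scaler0. Qed.

Section AllPlanesClosed.
Variable u : vT.
Hypothesis Hall : forall z, closed_plane u z.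

Lemma eigen_mod_line z : exists t, br u z - t *: z \in <[u]>%VS.
Proof. by have /span2P [s [t ->]] := Hall z; exists t; rewrite addrK memvZ ?memv_line. Qed.

(* For z in Fu + Fx0 this is linearity; otherwise z and x0 are
   independent modulo Fu and the eigenvalues of z, x0 and z + x0 agree. *)
Lemma common_eigenvalue (x0 : vT) lam : x0 \notin <[u]>%VS ->
  br u x0 - lam *: x0 \in <[u]>%VS -> forall z, br u z - lam *: z \in <[u]>%VS.
Proof.
move=> x0U Hx0 z.
have [/span2P [a [k ->]] | zP] := boolP (z \in (<[u]> + <[x0]>)%VS).
  have -> : br u (a *: u + k *: x0) - lam *: (a *: u + k *: x0)
      = k *: (br u x0 - lam *: x0) - (lam * a) *: u.
    rewrite brDr !brZr brxx scaler0 add0r scalerDr !scalerBr !scalerA (mulrC lam k).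
    by rewrite opprD addrA addrAC.
  by rewrite memvB ?memvZ ?memv_line.
have [t Hz] := eigen_mod_line z; have [t' Hzx] := eigen_mod_line (z + x0).
have Hcomb : (t' - t) *: z + (t' - lam) *: x0 \in <[u]>%VS.
  have -> : (t' - t) *: z + (t' - lam) *: x0
      = (br u z - t *: z) + (br u x0 - lam *: x0) - (br u (z + x0) - t' *: (z + x0)).
    rewrite brDr !scalerBl scalerDr [in RHS]addrACA opprB [RHS]addrC addrA subrK.
    by rewrite addrACA.
  by apply: memvB => //; apply: memvD.
have Ht : t' - t = 0.
  apply: (@scale_notin_eq0 (<[u]> + <[x0]>)%VS _ z) zP.
  rewrite -(addrK ((t' - lam) *: x0) ((t' - t) *: z)).
  by rewrite memvB ?memvZ ?plane_r ?(subvP (addvSl _ _)).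
have Hlam : t' - lam = 0.
  by apply: (scale_notin_eq0 _ x0U); rewrite Ht scale0r add0r in Hcomb.
by rewrite -(subr0_eq Hlam) (subr0_eq Ht).
Qed.

End AllPlanesClosed.

(* Let ad v be the identity modulo Fv.  Its fixed vectors form the subspace
   E = [v,L], and every vector is z = [v,z] - ([v,z] - z) in E + Fv. *)
Section AdIdentityModLine.
Variable v : vT.
Hypothesis Had : forall z, br v z - z \in <[v]>%VS.

Definition ad_fixed e := br v e = e.

Lemma ad_fixed_br z : ad_fixed (br v z).
Proof. by apply/eqP; rewrite -subr_eq0 -brBr br_line_eq0. Qed.

Lemma ad_fixedL k x y : ad_fixed x -> ad_fixed y -> ad_fixed (k *: x + y).
Proof. by rewrite /ad_fixed brR => -> ->. Qed.

Lemma ad_fixed0 : ad_fixed 0.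
Proof. by rewrite /ad_fixed br0r. Qed.

Lemma ad_fixedZ k x : ad_fixed x -> ad_fixed (k *: x).
Proof. by move=> Hx; rewrite -[_ *: _]addr0; apply: ad_fixedL Hx ad_fixed0. Qed.

Lemma ad_fixedB x y : ad_fixed x -> ad_fixed y -> ad_fixed (x - y).
Proof. by move=> Hx Hy; rewrite addrC -scaleN1r; apply: ad_fixedL. Qed.

Lemma ad_fixed_line e : ad_fixed e -> e \in <[v]>%VS -> e = 0.
Proof. by move=> He /br_line_eq0; rewrite He. Qed.

Lemma ad_decomp z : z = br v z - (br v z - z).
Proof. by rewrite opprB addrC subrK. Qed.

(* By Jacobi, the bracket of two fixed vectors a, b satisfies
   [v,[a,b]] = 2[a,b]; as [v,[a,b]] - [a,b] lies in Fv, [a,b] lies in Fv,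
   so [v,[a,b]] = 0 and 2[a,b] = 0. *)
Lemma br_fixed a b : ad_fixed a -> ad_fixed b ->
  br a b \in <[v]>%VS /\ br a b + br a b = 0.
Proof.
move=> Ha Hb.
have Evab : br v (br a b) = br a b + br a b.
  have := jacobi v a b; rewrite (brC b v) Hb (brNr b a) Ha (brC b a) -addrA -opprD.
  by move/eqP; rewrite subr_eq0 => /eqP.
have Hm : br a b \in <[v]>%VS by have := Had (br a b); rewrite Evab addrK.
by split; rewrite // -Evab br_line_eq0.
Qed.

(* If E is abelian then L = E + Fv is almost abelian: [L,L] = E, since
   brackets of fixed vectors vanish and [v,L] = E. *)
Lemma fixed_abelian_almost_abelian :
  (forall a b, ad_fixed a -> ad_fixed b -> br a b = 0) -> almost_abelian br.
Proof.
move=> Hab.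
have Hbr x y : ad_fixed (br x y).
  rewrite (ad_decomp x) (ad_decomp y).
  have [[dx ->] [dy ->]] := (vlineP _ _ (Had x), vlineP _ _ (Had y)).
  rewrite !brBl !brBr (Hab _ _ (ad_fixed_br x) (ad_fixed_br y)) !brZl !brZr brxx.
  rewrite !scaler0 subr0 sub0r (brC (br v x) v) scalerN opprK.
  by apply: ad_fixedB; apply: ad_fixedZ; apply: ad_fixed_br.
have HL2 w : w \in brv br fullv fullv -> ad_fixed w.
  apply: span_ind; [exact: ad_fixed0 | exact: ad_fixedL |].
  by move=> z /allpairsP [[x y] [_ _ ->]].
exists v; split.
- apply/eqP; rewrite eqEsubv subvf /=; apply/subvP => z _.
  rewrite (ad_decomp z) memvB //; last exact: (subvP (addvSr _ _)).
  exact/(subvP (addvSl _ _))/mem_brv/memvf/memvf.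
- apply/eqP; rewrite -subv0; apply/subvP => w /memv_capP [H1 H2].
  by rewrite memv0; apply/eqP/ad_fixed_line => //; apply: HL2.
- by move=> y z Hy Hz; apply: Hab; apply: HL2.
- by move=> y Hy; apply: HL2.
Qed.

Lemma fixed_nonabelian_pchar2 a b : ad_fixed a -> ad_fixed b -> br a b != 0 ->
  2%N \in [pchar F].
Proof.
move=> Ha Hb Hab; have [_] := br_fixed Ha Hb.
rewrite -[br a b]scale1r -scalerDl => /eqP; rewrite scaler_eq0 (negbTE Hab) orbF.
by move=> H2; rewrite inE /=.
Qed.

(* Fixed vectors A, b with [A,b] = v span E: by Jacobi a fixed z equals
   -([b,z]/v) A - ([z,A]/v) b, as [b,z] and [z,A] lie in Fv. *)
Lemma fixed_span2 A b z : ad_fixed A -> ad_fixed b -> br A b = v ->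
  ad_fixed z -> exists p q, z = p *: A + q *: b.
Proof.
move=> HA Hb HAb Hz.
have /vlineP [w1 E1] := (br_fixed Hb Hz).1.
have /vlineP [w2 E2] := (br_fixed Hz HA).1.
exists (- w1), (- w2).
have := jacobi A b z; rewrite E1 E2 HAb !brZr (brC A v) (brC b v) (brC z v) HA Hb Hz.
by move/eqP; rewrite addr_eq0 opprK => /eqP <-; rewrite !scaleNr !scalerN.
Qed.

Lemma fixed_frame A b : ad_fixed A -> ad_fixed b -> br A b = v ->
  forall z, exists p q t, z = p *: A + q *: b + t *: v.
Proof.
move=> HA Hb HAb z.
have [p [q Epq]] := fixed_span2 HA Hb HAb (ad_fixed_br z).
have [m Em] := vlineP _ _ (Had z).
by exists p, q, (- m); rewrite {1}(ad_decomp z) Em Epq scaleNr.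
Qed.

End AdIdentityModLine.

Definition iso_K_line (w : vT) : Prop :=
  exists f : vT -> 'rV[F]_3,
    [/\ (forall (a : F) (x y : vT), f (a *: x + y) = a *: f x + f y),
        bijective f,
        (forall x y : vT, f (br x y) = Kbr (f x) (f y)) &
        (forall z, z \in <[Kc F]>%VS <-> exists2 x, x \in <[w]>%VS & f x = z)].

(* In characteristic 2, a frame A, B, V of L with [A,B] = V,
   [V,A] = A and [V,B] = B satisfies the multiplication table of K (signs
   being irrelevant), so its coordinate map identifies L with K, sending FV
   onto Fc. *)
Section KModel.
Hypothesis pc2 : 2%N \in [pchar F].
Variables A B V : vT.
Hypothesis HV : V != 0.
Hypotheses (HAB : br A B = V) (HVA : br V A = A) (HVB : br V B = B).
Hypothesis Hspan : forall z, exists p q t, z = p *: A + q *: B + t *: V.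

Definition frame_vec (r : 'rV[F]_3) := r 0 0 *: A + r 0 1 *: B + r 0 2 *: V.

Lemma frame_vec_lin k r s : frame_vec (k *: r + s) = k *: frame_vec r + frame_vec s.
Proof.
rewrite /frame_vec !mxE !scalerDl !scalerDr !scalerA.
by rewrite (AC (2*2*2) ((1*3*5)*(2*4*6))).
Qed.

Lemma frame_vec_br r s : frame_vec (Kbr r s) = br (frame_vec r) (frame_vec s).
Proof.
have [HAV HBA HBV] : [/\ br A V = A, br B A = V & br B V = B].
  by rewrite (brC A V) (brC B A) (brC B V) HVA HAB HVB !(oppv_pchar2 _ pc2).
rewrite /frame_vec /Kbr !mxE /=.
rewrite !brDl !brZl !brDr !brZr !brxx HAB HVA HVB HAV HBA HBV.
rewrite !scaler0 !addr0 !add0r !(oppr_pchar2 pc2) !scalerDl !scalerDr !scalerA.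
by rewrite [LHS](AC (2*2*2) ((5*1)*(6*3)*(2*4))).
Qed.

(* The coordinates of a vector are recovered by bracketing with V and B. *)
Lemma frame_vec_inj : injective frame_vec.
Proof.
suff frame_vec_eq0 r : frame_vec r = 0 -> r = 0.
  move=> r s E; apply/eqP; rewrite -subr_eq0; apply/eqP/frame_vec_eq0.
  by rewrite -scaleN1r addrC frame_vec_lin E scaleN1r addNr.
move=> Hr.
have HB : B != 0 by apply: contraNneq HV => B0; rewrite -HAB B0 br0r.
have r2 : r 0 2 = 0.
  have : frame_vec r - br V (frame_vec r) = r 0 2 *: V.
    by rewrite /frame_vec !brDr !brZr HVA HVB brxx scaler0 addr0 addrC addKr.
  by rewrite Hr br0r subr0 => /esym/eqP; rewrite scaler_eq0 (negbTE HV) orbF => /eqP.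
have r0 : r 0 0 = 0.
  have : br (frame_vec r) B = r 0 0 *: V.
    by rewrite /frame_vec r2 scale0r addr0 !brDl !brZl HAB brxx scaler0 addr0.
  by rewrite Hr br0l => /esym/eqP; rewrite scaler_eq0 (negbTE HV) orbF => /eqP.
have r1 : r 0 1 = 0.
  move: Hr; rewrite /frame_vec r2 r0 !scale0r addr0 add0r => /eqP.
  by rewrite scaler_eq0 (negbTE HB) orbF => /eqP.
apply/rowP => i; rewrite mxE; case: i => [[|[|[|//]]] Hi].
- by rewrite (_ : Ordinal Hi = 0) //; apply: val_inj.
- by rewrite (_ : Ordinal Hi = 1) //; apply: val_inj.
- by rewrite (_ : Ordinal Hi = 2%R) //; apply: val_inj.
Qed.

Lemma frame_vec_surj z : exists r, frame_vec r == z.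
Proof.
have [p [q [t ->]]] := Hspan z.
by exists (\row_(i < 3) [:: p; q; t]`_i); rewrite /frame_vec !mxE.
Qed.

Definition frame_coord z := xchoose (frame_vec_surj z).

Lemma frame_coordK z : frame_vec (frame_coord z) = z.
Proof. exact/eqP/(xchooseP (frame_vec_surj z)). Qed.

Lemma frame_vecK r : frame_coord (frame_vec r) = r.
Proof. by apply: frame_vec_inj; rewrite frame_coordK. Qed.

Lemma frame_vec_Kc k : frame_vec (k *: Kc F) = k *: V.
Proof. by rewrite /frame_vec /Kc !mxE /= !mulr0 !scale0r !add0r mulr1. Qed.

Lemma frame_iso : iso_K_line V.
Proof.
exists frame_coord; split.
- by move=> a x y; apply: frame_vec_inj; rewrite frame_vec_lin !frame_coordK.
- by exists frame_vec; [exact: frame_coordK | exact: frame_vecK].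
- by move=> x y; apply: frame_vec_inj; rewrite frame_vec_br !frame_coordK.
move=> z; split.
  move=> /vlineP [k ->]; exists (k *: V); first by rewrite memvZ ?memv_line.
  by rewrite -frame_vec_Kc frame_vecK.
by case=> x /vlineP [k ->] <-; apply/vlineP; exists k; rewrite -frame_vec_Kc frame_vecK.
Qed.

End KModel.

(* When ad v is the identity modulo Fv, either its fixed space E is abelian
   and L is almost abelian, or a nonzero bracket [a,b] = c v of fixed vectors
   forces characteristic 2 and yields the frame a/c, b, v of a model of K. *)
Lemma ad_identity_case (v : vT) : v != 0 -> (forall z, br v z - z \in <[v]>%VS) ->
  almost_abelian br \/ (2%N \in [pchar F] /\ iso_K_line v).
Proof.
move=> Hv Had.
have [[a [b [Ha Hb Hab]]] | Habel] :=
  classic (exists a b, [/\ ad_fixed v a, ad_fixed v b & br a b != 0]); last first.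
  left; apply: fixed_abelian_almost_abelian => // a b Ha Hb.
  by apply/eqP; apply: contra_notT Habel => Hab; exists a, b.
right; have pc2 := fixed_nonabelian_pchar2 Had Ha Hb Hab; split=> //.
have [c Ec] := vlineP _ _ (br_fixed Had Ha Hb).1.
have Hc : c != 0 by apply: contraNneq Hab => c0; rewrite Ec c0 scale0r.
have HA := ad_fixedZ c^-1 Ha.
have HAb : br (c^-1 *: a) b = v by rewrite brZl Ec scalerK.
apply: (frame_iso pc2 Hv HAb HA Hb).
exact: (fixed_frame Had HA Hb HAb).
Qed.

(* When every plane through u is closed and Fu is not an ideal, the common
   eigenvalue lam of ad u modulo Fu is nonzero, and v = u / lam spans Fu with
   ad v the identity modulo Fv. *)
Lemma normalize_line (u : vT) : u != 0 -> (forall z, closed_plane u z) ->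
  ~ ideal br <[u]>%VS ->
  exists v, [/\ v != 0, <[v]>%VS = <[u]>%VS & forall z, br v z - z \in <[v]>%VS].
Proof.
move=> Hu Hall Hni.
have [x0 Hx0] : exists x0, br u x0 \notin <[u]>%VS.
  apply: NNPP => Hid; apply: Hni => x y /vlineP [k ->].
  rewrite brZr brC memvZ // memvN; apply/negPn/negP => Hn.
  by apply: Hid; exists x.
have /span2P [al [lam Eux0]] := Hall x0.
have x0U : x0 \notin <[u]>%VS by apply: contra Hx0 => /br_line_eq0 ->; rewrite mem0v.
have Hlam : lam != 0.
  by apply: contraNneq Hx0 => lam0; rewrite Eux0 lam0 scale0r addr0 memvZ ?memv_line.
have Hx0lam : br u x0 - lam *: x0 \in <[u]>%VS by rewrite Eux0 addrK memvZ ?memv_line.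
have Heig := common_eigenvalue Hall x0U Hx0lam.
have Hv : lam^-1 *: u != 0 by rewrite scaler_eq0 negb_or invr_eq0 Hlam.
have Evu : <[lam^-1 *: u]>%VS = <[u]>%VS.
  by apply/eqP; rewrite eqEdim -memvE memvZ ?memv_line //= !dim_vline Hv Hu.
exists (lam^-1 *: u); split=> // z; rewrite Evu brZl.
by rewrite -[z in _ - z](scalerK Hlam) -scalerBr memvZ.
Qed.

End LieAlgebra.

Theorem lemma3p4 (F : fieldType) (vT : vectType F) (br : vT -> vT -> vT)
  (Hlie : lie_bracket br) (u : vT) (hu : u != 0)
  (Hsm : semi_modular br <[u]>%VS) (Hni : ~ ideal br <[u]>%VS) :
  almost_abelian br
  \/ (forall x : vT, x \notin <[u]>%VS ->
        forall W, is_gen br W <[u]>%VS <[x]>%VS -> mu_algebra br W)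
  \/ (2%N \in [pchar F] /\
      exists f : vT -> 'rV[F]_3,
        [/\ (forall (a : F) (x y : vT), f (a *: x + y) = a *: f x + f y),
            bijective f,
            (forall x y : vT, f (br x y) = Kbr (f x) (f y)) &
            (forall z, z \in <[Kc F]>%VS <-> exists2 x, x \in <[u]>%VS & f x = z)]).
Proof.
have [[x Hx] | Hall] := classic (exists x, ~ closed_plane br u x).
  right; left => y yU W HW.
  have Hy := closed_plane_propagates Hlie hu Hsm.1 Hx yU.
  exact: (gen_mu_algebra Hlie hu Hsm yU Hy HW).
have {}Hall z : closed_plane br u z by apply: NNPP => Hz; apply: Hall; exists z.
have [v [Hv Evu Had]] := normalize_line Hlie hu Hall Hni.
have [|[pc2 Hiso]] := ad_identity_case Hlie Hv Had; first by left.
by right; right; split=> //; rewrite -Evu.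
Qed.
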